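(* There exists $c>0$ such that the following holds. Let $t\geq 2$ be an integer and let $\omega:2^{[t]}\to\mathbb{R}_{\geq 0}$ be a balanced weight function with $\omega(2^{[t]})\geq 9/10$. Then either (i) $\omega(\emptyset)\geq 1/10$ and $\omega([t])\geq 1/10$, or (ii) there exist a positive integer $s$ and pairwise disjoint families $\mathcal{A}_1,\dots,\mathcal{A}_s\subset 2^{[t]}$ such that $\sum_{i=1}^s\omega(\mathcal{A}_i)^c\geq 1$, and for all $1\leq i<j\leq s$, every $A\in\mathcal{A}_i$ is incomparable (with respect to inclusion) to every $B\in\mathcal{A}_j$.
   Context: $2^{[t]}$ is the family of all subsets of $[t]=\{1,\dots,t\}$, ordered by inclusion. For a weight function $\omega:2^{[t]}\to\mathbb{R}_{\geq0}$ and $\mathcal{A}\subset 2^{[t]}$, $\omega(\mathcal{A})=\sum_{A\in\mathcal{A}}\omega(A)$. For $i\in[t]$ let $F^-_t(i)=\{A\subset[t]: i\notin A\}$ and $F^+_t(i)=\{A\subset[t]: i\in A\}$. $\omega$ is balanced if $\omega(F^-_t(i))\leq 1/2$ and $\omega(F^+_t(i))\leq 1/2$ for every $i\in[t]$. *)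

From HB Require Import structures.
From mathcomp Require Import all_boot all_order all_algebra.
From mathcomp Require Import all_classical all_reals all_analysis.
Set Implicit Arguments. Unset Strict Implicit. Unset Printing Implicit Defensive.
Import Order.TTheory GRing.Theory Num.Theory.
Local Open Scope ring_scope.

Definition wt (R : realType) (t : nat) (w : {set 'I_t} -> R)
  (A : {set {set 'I_t}}) : R := \sum_(X in A) w X.

Definition Fminus (t : nat) (i : 'I_t) : {set {set 'I_t}} := [set X : {set 'I_t} | i \notin X].
Definition Fplus (t : nat) (i : 'I_t) : {set {set 'I_t}} := [set X : {set 'I_t} | i \in X].

Definition balanced (R : realType) (t : nat) (w : {set 'I_t} -> R) : Prop :=
  forall i : 'I_t, wt w (Fminus i) <= 1/2 /\ wt w (Fplus i) <= 1/2.

Definition incomparable (T : finType) (X Y : {set T}) : bool :=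
  ~~ (X \subset Y) && ~~ (Y \subset X).

From HB Require Import structures.
From mathcomp Require Import all_boot all_order all_algebra.
From mathcomp Require Import all_classical all_reals all_analysis.
From mathcomp Require Import ring lra.
Import Order.TTheory GRing.Theory Num.Theory.
Local Open Scope ring_scope.

(* Let f be the identity if w(∅) < 1/10 and complementation if w([t]) < 1/10
   (otherwise (i) holds).  For Z ⊆ [t] let q(Z) be the weight of the sets X
   with f X disjoint from Z, and minimise the potential q(Z) + H(|Z|), where
   H(n) = (1 - 1/n)/4 and H(0) = 0.  As w(2^[t]) >= 9/10 and w is balanced,
   q(∅) and every q({k}) are at least 2/5, whereas q([t]) + H(t) < 1/10 + 1/4,
   so a minimiser S has n = |S| >= 2 elements.  Removing k from S raises q by
   the weight of the family E_k of sets X with f X ∩ S = {k} and lowers H by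
   1/(4n(n-1)) >= 1/n^3, so w(E_k) >= 1/n^3 by minimality.  The n families E_k
   are disjoint and mutually incomparable, and sum_k w(E_k)^(1/3) >= 1. *)

Definition separated_families {R : realType} {t : nat} (w : {set 'I_t} -> R)
    (c : R) : Prop :=
  exists (s : nat) (A : 'I_s -> {set {set 'I_t}}),
    (0 < s)%N /\
    (forall i j : 'I_s, i != j -> [disjoint A i & A j]) /\
    1 <= \sum_(i < s) (wt w (A i)) `^ c /\
    (forall i j : 'I_s, (i < j)%N ->
       forall X Y, X \in A i -> Y \in A j -> incomparable X Y).

Lemma disjoint_setD1 (T : finType) (A S : {set T}) (k : T) :
  [disjoint A & S :\ k] = [disjoint A & S] || (A :&: S == [set k]).
Proof. by rewrite -!setI_eq0 finset.setIDA finset.setD_eq0 subset1 orbC. Qed.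

Lemma incomparable_setC (T : finType) (X Y : {set T}) :
  incomparable (~: X) (~: Y) = incomparable X Y.
Proof. by rewrite /incomparable !finset.setCS andbC. Qed.

Lemma incomparable_setI1 {T : finType} {S X Y : {set T}} {k l : T} :
  k != l -> X :&: S = [set k] -> Y :&: S = [set l] -> incomparable X Y.
Proof.
move=> kl XS YS; apply/andP; split; apply/negP => /(finset.setSI S);
  by rewrite XS YS finset.sub1set finset.in_set1 => /eqP lk; rewrite lk eqxx in kl.
Qed.

Lemma ler_powR_root (R : realType) (n : nat) (x y : R) :
  (0 < n)%N -> 0 <= x -> x ^+ n <= y -> x <= y `^ n%:R^-1.
Proof.
move=> n_gt0 x_ge0 xy.
have y_ge0 : 0 <= y by apply: le_trans xy; exact: exprn_ge0.
have := @ge0_ler_powR R n%:R^-1 ltac:(by rewrite invr_ge0)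
  (x ^+ n) y ltac:(by rewrite nnegrE exprn_ge0) ltac:(by rewrite nnegrE) xy.
by rewrite -powR_mulrn // -powRrM mulfV ?pnatr_eq0 -?lt0n // powRr1.
Qed.

Section Weights.
Context {R : realType} {t : nat} (w : {set 'I_t} -> R).

Lemma wt_set1 (X : {set 'I_t}) : wt w [set X] = w X.
Proof. by rewrite /wt big_set1. Qed.

Lemma wt_setT_Fplus_Fminus (k : 'I_t) :
  wt w [set: {set 'I_t}] = wt w (Fplus k) + wt w (Fminus k).
Proof.
rewrite /wt (bigID (fun X : {set 'I_t} => k \in X)) /=.
by congr (_ + _); apply: eq_bigl => X; rewrite !inE.
Qed.

Lemma balanced_Fminus_Fplus_ge (k : 'I_t) :
  balanced w -> 9/10 <= wt w [set: {set 'I_t}] ->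
  2/5 <= wt w (Fminus k) /\ 2/5 <= wt w (Fplus k).
Proof.
move=> /(_ k) [Fminus_le Fplus_le]; rewrite (wt_setT_Fplus_Fminus k).
by split; lra.
Qed.

End Weights.

Definition penalty (R : realType) (n : nat) : R :=
  if n is 0%N then 0 else (1 - n%:R^-1) / 4.

Lemma penalty1 (R : realType) : penalty R 1 = 0.
Proof. by rewrite /penalty invr1 subrr mul0r. Qed.

Lemma penalty_le (R : realType) (n : nat) : penalty R n <= 1/4.
Proof.
case: n => [|n] /=; first lra.
have : 0 <= n.+1%:R^-1 :> R by rewrite invr_ge0 ler0n.
by move: (n.+1%:R^-1 : R) => y; lra.
Qed.

(* The increment is 1/(4n(n-1)), and n^2 >= 4(n-1) as (n-2)^2 >= 0. *)
Lemma penalty_increment (R : realType) (m : nat) :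
  (m.+2%:R^-1) ^+ 3 <= penalty R m.+2 - penalty R m.+1.
Proof.
rewrite /penalty; set n : R := m.+2%:R.
have n_ge2 : 2 <= n by rewrite /n ler_nat.
have -> : m.+1%:R = n - 1 :> R by rewrite /n -(addn1 m.+1) natrD addrK.
clearbody n.
have -> : (1 - n^-1) / 4 - (1 - (n - 1)^-1) / 4 = (4 * (n - 1) * n)^-1 :> R.
  have n_neq0 : n != 0 by apply/eqP; lra.
  have n1_neq0 : n - 1 != 0 by apply/eqP; lra.
  by field; rewrite n_neq0 n1_neq0.
rewrite exprVn lef_pV2 ?posrE; last 2 first.
- by apply: exprn_gt0; lra.
- by apply: mulr_gt0; [apply: mulr_gt0|]; lra.
have : 0 <= n * (n - 2) ^+ 2 by apply: mulr_ge0; [lra | exact: sqr_ge0].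
by nra.
Qed.

Section Potential.
Context {R : realType} {t : nat} (w : {set 'I_t} -> R).
Context (f : {set 'I_t} -> {set 'I_t}).

Definition avoiding_wt (Z : {set 'I_t}) : R := wt w [set X | [disjoint f X & Z]].

Definition potential (Z : {set 'I_t}) : R := avoiding_wt Z + penalty R #|Z|.

Definition traced_at (S : {set 'I_t}) (k : 'I_t) : {set {set 'I_t}} :=
  [set X | f X :&: S == [set k]].

Lemma avoiding_wt_set0 : avoiding_wt finset.set0 = wt w [set: {set 'I_t}].
Proof.
rewrite /avoiding_wt; congr wt; apply/setP => X.
by rewrite !inE -setI_eq0 finset.setI0 eqxx.
Qed.

Lemma avoiding_wt_set1 (k : 'I_t) :
  avoiding_wt [set k] = wt w [set X | k \notin f X].
Proof.
by rewrite /avoiding_wt; congr wt; apply/setP => X;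
  rewrite !inE disjoint_sym disjoints1.
Qed.

Lemma avoiding_wt_setT :
  avoiding_wt [set: 'I_t] = wt w [set X | f X == finset.set0].
Proof.
rewrite /avoiding_wt; congr wt; apply/setP => X.
by rewrite !inE -setI_eq0 finset.setIT.
Qed.

Lemma avoiding_wt_setD1 (S : {set 'I_t}) (k : 'I_t) :
  avoiding_wt (S :\ k) = avoiding_wt S + wt w (traced_at S k).
Proof.
rewrite /avoiding_wt /wt (bigID (fun X => [disjoint f X & S])) /=.
congr (_ + _); apply: eq_bigl => X; rewrite !inE disjoint_setD1.
all: case: (boolP [disjoint f X & S]) => /= [/disjoint_setI0 XS|_];
  rewrite ?andbF ?andbT //.
by rewrite XS eq_sym; apply/esym/negbTE/set0Pn; exists k; rewrite set11.
Qed.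

Lemma separated_families_traced (S : {set 'I_t}) :
  (forall X Y, incomparable (f X) (f Y) -> incomparable X Y) ->
  (0 < #|S|)%N ->
  (forall k, k \in S -> (#|S|%:R^-1) ^+ 3 <= wt w (traced_at S k)) ->
  separated_families w (1/3).
Proof.
move=> f_incomp S_gt0 traced_heavy.
exists #|S|, (fun i => traced_at S (enum_val i)); split=> //; split; [|split].
- move=> i j; apply: contraR; rewrite -setI_eq0 => /set0Pn [X].
  rewrite !inE => /andP [/eqP XSi /eqP XSj].
  by rewrite -(inj_eq enum_val_inj) -(inj_eq set1_inj) -XSi -XSj.
- have inv_ge0 : 0 <= #|S|%:R^-1 :> R by rewrite invr_ge0 ler0n.
  apply: (@le_trans _ _ (\sum_(i < #|S|) #|S|%:R^-1)).
    by rewrite sumr_const card_ord -[leRHS]mulr_natr mulVf ?pnatr_eq0 -?lt0n.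
  apply: ler_sum => i _; rewrite div1r.
  exact/ler_powR_root/traced_heavy/enum_valP.
- move=> i j ij X Y; rewrite !inE => /eqP XS /eqP YS.
  apply: f_incomp; apply: (incomparable_setI1 _ XS YS).
  by rewrite (inj_eq enum_val_inj) neq_ltn ij.
Qed.

Section Minimiser.
Context {S : {set 'I_t}}.
Hypothesis S_min : forall Z, potential S <= potential Z.

Lemma minimiser_card_gt1 :
  2/5 <= wt w [set: {set 'I_t}] ->
  (forall k, 2/5 <= wt w [set X | k \notin f X]) ->
  wt w [set X | f X == finset.set0] < 1/10 ->
  (1 < #|S|)%N.
Proof.
move=> set0_heavy set1_heavy setT_light.
have S_light : potential S < 2/5.
  apply: le_lt_trans (S_min [set: 'I_t]) _.
  rewrite /potential avoiding_wt_setT.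
  by have := penalty_le R #|[set: 'I_t]|; lra.
case S_card : #|S| => [|[|//]]; move: S_light.
- rewrite /potential S_card (cards0_eq S_card) avoiding_wt_set0 /= addr0; lra.
- have /cards1P [k ->] : #|S| == 1%N by rewrite S_card.
  rewrite /potential cards1 penalty1 addr0 avoiding_wt_set1.
  by have := set1_heavy k; lra.
Qed.

Lemma minimiser_traced_heavy (k : 'I_t) : k \in S -> (1 < #|S|)%N ->
  (#|S|%:R^-1) ^+ 3 <= wt w (traced_at S k).
Proof.
move=> kS; case S_card : #|S| => [|[|m]] // _.
have := S_min (S :\ k); rewrite /potential avoiding_wt_setD1.
have := cardsD1 k S; rewrite kS S_card add1n => -[<-].
by move=> potential_le; apply: le_trans (penalty_increment R m) _; lra.
Qed.

End Minimiser.

Lemma separated_families_of_minimiser :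
  (forall X Y, incomparable (f X) (f Y) -> incomparable X Y) ->
  2/5 <= wt w [set: {set 'I_t}] ->
  (forall k, 2/5 <= wt w [set X | k \notin f X]) ->
  wt w [set X | f X == finset.set0] < 1/10 ->
  separated_families w (1/3).
Proof.
move=> f_incomp set0_heavy set1_heavy setT_light.
have [S _ S_argmin] := @arg_minP _ R _ finset.set0 predT potential isT.
have S_min Z : potential S <= potential Z by exact: S_argmin.
have S_gt1 := minimiser_card_gt1 S_min set0_heavy set1_heavy setT_light.
apply: (separated_families_traced S f_incomp (ltnW S_gt1)) => k kS.
exact: minimiser_traced_heavy S_min k kS S_gt1.
Qed.

End Potential.

Theorem lemma4p2 (R : realType) :
  exists c : R, 0 < c /\
  forall (t : nat) (w : {set 'I_t} -> R),
    (2 <= t)%N ->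
    (forall X, 0 <= w X) ->
    balanced w ->
    9/10 <= wt w [set: {set 'I_t}] ->
    (1/10 <= w (finset.set0 : {set 'I_t}) /\ 1/10 <= w [set: 'I_t])
    \/
    (exists (s : nat) (A : 'I_s -> {set {set 'I_t}}),
        (0 < s)%N /\
        (forall i j : 'I_s, i != j -> [disjoint A i & A j]) /\
        1 <= \sum_(i < s) (wt w (A i)) `^ c /\
        (forall i j : 'I_s, (i < j)%N ->
           forall X Y, X \in A i -> Y \in A j -> incomparable X Y)).
Proof.
exists (1/3); split; first lra.
move=> t w _ _ w_bal w_total.
have total_heavy : 2/5 <= wt w [set: {set 'I_t}] by lra.
have halves_heavy := fun k => balanced_Fminus_Fplus_ge w k w_bal w_total.
case: (ltrP (w finset.set0) (1/10)) => [set0_light | set0_heavy].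
  right; apply: (separated_families_of_minimiser w id) => // [k|].
  - exact: (halves_heavy k).1.
  - by rewrite (_ : [set X | id X == finset.set0] = [set finset.set0]) ?wt_set1 //;
      apply/setP => X; rewrite !inE.
case: (ltrP (w [set: 'I_t]) (1/10)) => [setT_light | setT_heavy]; last by left.
right; apply: (separated_families_of_minimiser w (@finset.setC _)) => // [X Y|k|].
- by rewrite incomparable_setC.
- rewrite (_ : [set X | k \notin ~: X] = Fplus k); first exact: (halves_heavy k).2.
  by apply/setP => X; rewrite !inE negbK.
- rewrite (_ : [set X | ~: X == finset.set0] = [set [set: 'I_t]]) ?wt_set1 //.
  by apply/setP => X; rewrite !inE -finset.setCT (can_eq finset.setCK).
Qed.
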